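(* Let $R>0$ and let $E\subset\mathbb{R}^d$ be a body. Then $$(\partial E_R)'_R = co_R(E)\,\cup\, E'_{2R}.$$
   Context: A body is a nonempty closed subset of $\mathbb{R}^d$. Fix $R>0$; for $x\in\mathbb{R}^d$ let $B(x)=\{y:|y-x|<R\}$ be the open ball of radius $R$ centered at $x$. For a set $A\subset\mathbb{R}^d$ and $\rho>0$ put $A_\rho=\{x:\operatorname{dist}(x,A)<\rho\}$ and $A'_\rho=\mathbb{R}^d\setminus A_\rho=\{x:\operatorname{dist}(x,A)\ge\rho\}$ (with $\emptyset'_\rho=\mathbb{R}^d$). For a body $E$, the $R$-hulloid is $co_R(E)=\bigcap\{\mathbb{R}^d\setminus B : B \text{ an open ball of radius } R,\ B\cap E=\emptyset\}$, with $co_R(E)=\mathbb{R}^d$ if there is no such ball. *)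

From mathcomp Require Import all_boot all_order all_algebra.
From mathcomp Require Import boolp classical_sets reals.
Set Implicit Arguments.
Unset Strict Implicit.
Unset Printing Implicit Defensive.
Import Order.TTheory GRing.Theory Num.Theory.
Local Open Scope ring_scope.
Local Open Scope classical_set_scope.

Section Defs.
Variables (R : realType) (d : nat).
Notation pt := 'rV[R]_d.

Definition edist (x y : pt) : R :=
  Num.sqrt (\sum_(i < d) (x ord0 i - y ord0 i) ^+ 2).

Definition eball (c : pt) (r : R) : set pt := [set y | edist y c < r].

(* A_rho = {x | dist(x,A) < rho}  (dist(x,A) < rho iff some a in A is closer than rho) *)
Definition thicken (A : set pt) (rho : R) : set pt :=
  [set x | exists2 a, A a & edist x a < rho].

(* A'_rho = R^d \ A_rho = {x | dist(x,A) >= rho};  empty'_rho = R^d *)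
Definition far (A : set pt) (rho : R) : set pt := ~` thicken A rho.

Definition eclosure (A : set pt) : set pt :=
  [set x | forall e : R, 0 < e -> exists2 a, A a & edist x a < e].
Definition einterior (A : set pt) : set pt :=
  [set x | exists2 e : R, 0 < e & eball x e `<=` A].
Definition eboundary (A : set pt) : set pt := eclosure A `\` einterior A.

Definition body (E : set pt) : Prop := E !=set0 /\ eclosure E `<=` E.

(* R-hulloid: intersection of complements of open R-balls disjoint from E
   (= R^d when there is no such ball) *)
Definition coR (r : R) (E : set pt) : set pt :=
  [set x | forall c : pt, eball c r `&` E = set0 -> ~ eball c r x].

End Defs.

(* A point x with dist(x, ∂E_R) >= R and outside co_R(E) lies in an open
   R-ball B(c) missing E.  If some e in E were closer than 2R to x, the
   midpoint p of [x, e] would be in E_R and within R of x, while c is not in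
   E_R; the segment [c, p] then meets ∂E_R, and by convexity of B(x) it does
   so within R of x, a contradiction.  Conversely, if b in ∂E_R is closer
   than R to x, then either x is within 2R of E (b is a limit of points of
   E_R), or x is outside co_R(E): otherwise every point close enough to b
   has its R-ball containing x, hence meeting E, so b would be interior to
   E_R. *)
From mathcomp Require Import all_boot all_order all_algebra.
From mathcomp Require Import boolp classical_sets reals.
From mathcomp Require Import ring lra.
Import Order.TTheory GRing.Theory Num.Theory.
Local Open Scope ring_scope.
Local Open Scope classical_set_scope.
Set Implicit Arguments.
Unset Strict Implicit.

Section EuclideanNorm.
Variables (R : realType) (d : nat).
Implicit Types (u v x y z : 'rV[R]_d).

Lemma cauchy_schwarz (a b : 'I_d -> R) :
  (\sum_i a i * b i) ^+ 2 <= (\sum_i a i ^+ 2) * (\sum_i b i ^+ 2).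
Proof.
set A := \sum_i a i ^+ 2; set B := \sum_i b i ^+ 2; set D := \sum_i a i * b i.
have lagrange : \sum_i \sum_j (a i * b j - a j * b i) ^+ 2 = 2 * (A * B - D ^+ 2).
  rewrite (eq_bigr (fun i => a i ^+ 2 * B + b i ^+ 2 * A - (2 * D) * (a i * b i))).
    by rewrite sumrB big_split /= -!mulr_suml -mulr_sumr -/A -/B -/D; ring.
  move=> i _; rewrite -mulrA [D * _]mulrC mulrA /A /B /D !mulr_sumr.
  by rewrite -big_split -sumrB /=; apply: eq_bigr => j _; ring.
have : 0 <= \sum_i \sum_j (a i * b j - a j * b i) ^+ 2.
  by apply: sumr_ge0 => i _; apply: sumr_ge0 => j _; exact: sqr_ge0.
rewrite lagrange; nra.
Qed.

Definition enorm u := Num.sqrt (\sum_(i < d) u ord0 i ^+ 2).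

Lemma enorm_ge0 u : 0 <= enorm u.
Proof. exact: sqrtr_ge0. Qed.

Lemma enormZ k u : enorm (k *: u) = `|k| * enorm u.
Proof.
rewrite /enorm (eq_bigr (fun i => k ^+ 2 * u ord0 i ^+ 2)); last first.
  by move=> i _; rewrite mxE exprMn.
by rewrite -mulr_sumr sqrtrM ?sqr_ge0 // sqrtr_sqr.
Qed.

Lemma enormD u v : enorm (u + v) <= enorm u + enorm v.
Proof.
rewrite /enorm.
set A := \sum_i u ord0 i ^+ 2; set B := \sum_i v ord0 i ^+ 2.
set D := \sum_i u ord0 i * v ord0 i.
have A0 : 0 <= A by apply: sumr_ge0 => i _; exact: sqr_ge0.
have B0 : 0 <= B by apply: sumr_ge0 => i _; exact: sqr_ge0.
have D_le : D <= Num.sqrt A * Num.sqrt B.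
  rewrite -sqrtrM // (le_trans (ler_norm D)) // -sqrtr_sqr.
  by apply: ler_wsqrtr; exact: cauchy_schwarz.
have -> : \sum_i (u + v) ord0 i ^+ 2 = A + 2 * D + B.
  rewrite /A /B /D mulr_sumr -!big_split /=.
  by apply: eq_bigr => i _; rewrite mxE; ring.
have := sqr_sqrtr A0; have := sqr_sqrtr B0.
have := sqrtr_ge0 A; have := sqrtr_ge0 B => sA sB hA hB.
rewrite -[Num.sqrt A + Num.sqrt B]ger0_norm ?addr_ge0 // -sqrtr_sqr.
apply: ler_wsqrtr; nra.
Qed.

Lemma edistE x y : edist x y = enorm (x - y).
Proof. by rewrite /edist /enorm; congr Num.sqrt; apply: eq_bigr => i _; rewrite !mxE. Qed.

Lemma edistC x y : edist x y = edist y x.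
Proof. by rewrite !edistE -opprB -scaleN1r enormZ normrN normr1 mul1r. Qed.

Lemma edistxx x : edist x x = 0.
Proof. by rewrite /edist big1 ?sqrtr0 // => i _; rewrite subrr expr0n. Qed.

Lemma edist_triangle x y z : edist x z <= edist x y + edist y z.
Proof. by rewrite !edistE -[x - z](subrKA y); exact: enormD. Qed.

End EuclideanNorm.

Section Segments.
Variables (R : realType) (d : nat).
Implicit Types (a b c p x : 'rV[R]_d) (s t : R).

Lemma edist_segment c p s t :
  edist (c + s *: (p - c)) (c + t *: (p - c)) = `|s - t| * enorm (p - c).
Proof. by rewrite edistE -enormZ; congr enorm; apply/rowP => i; rewrite !mxE; ring. Qed.

Lemma eball_segment x r a b t : 0 <= t <= 1 ->
  eball x r a -> eball x r b -> eball x r (a + t *: (b - a)).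
Proof.
move=> /andP[t0 t1]; rewrite /eball /= !edistE => xa xb.
have -> : a + t *: (b - a) - x = (1 - t) *: (a - x) + t *: (b - x).
  by apply/rowP => i; rewrite !mxE; ring.
apply: (le_lt_trans (enormD _ _)); rewrite !enormZ !ger0_norm ?subr_ge0 //.
set A := enorm (a - x); set B := enorm (b - x).
have AM : (1 - t) * A <= (1 - t) * Num.max A B.
  by rewrite ler_wpM2l ?subr_ge0 // le_max lexx.
have BM : t * B <= t * Num.max A B by rewrite ler_wpM2l // le_max lexx orbT.
have : Num.max A B < r by rewrite gt_max xa xb.
lra.
Qed.

Lemma edist_midpoint x y : edist x (2^-1 *: (x + y)) = edist x y / 2.
Proof.
rewrite edistE; have -> : x - 2^-1 *: (x + y) = 2^-1 *: (x - y) by apply/rowP => i; rewrite !mxE; field.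
by rewrite enormZ ger0_norm ?invr_ge0 ?ler0n // -edistE mulrC.
Qed.

(* The last point of [0, 1] mapped outside F is a boundary point of F:
   points of the complement accumulate on it from the left (or it is one),
   points of F from the right (or it is p). *)
Lemma segment_meets_eboundary (F : set 'rV[R]_d) c p : ~ F c -> F p ->
  exists2 t, 0 <= t <= 1 & eboundary F (c + t *: (p - c)).
Proof.
move=> nFc Fp; set g := fun s => c + s *: (p - c); set N := enorm (p - c).
have N1 : 0 < N + 1 by have := enorm_ge0 (p - c); rewrite -/N; lra.
pose S := [set s | 0 <= s <= 1 /\ ~ F (g s)].
have S0 : S 0 by split; [rewrite lexx ler01 | rewrite /g scale0r addr0].
have S_sup : has_sup S by split; [exists 0 | exists 1 => s [/andP[_ ->]]].
set t := sup S.
have t0 : 0 <= t by exact: sup_upper_bound.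
have t1 : t <= 1 by apply: ge_sup; [exists 0 | move=> s [/andP[_ ->]]].
exists t; first by rewrite t0 t1.
split.
- move=> e e0; have [t_lt1|t_ge1] := ltP t 1; last first.
    have -> : t = 1 by apply/eqP; rewrite eq_le t1 t_ge1.
    by exists p; rewrite // /g scale1r addrC subrK edistxx.
  pose h := Num.min (1 - t) (e / (N + 1)).
  have h0 : 0 < h by rewrite lt_min subr_gt0 t_lt1 divr_gt0.
  have h1 : h <= 1 - t by rewrite ge_min lexx.
  have hN : h * (N + 1) <= e by rewrite -ler_pdivlMr // ge_min lexx orbT.
  exists (g (t + h)).
    apply: contrapT => nF.
    have : S (t + h) by split=> //; apply/andP; split; lra.
    by move/(sup_upper_bound S_sup); rewrite -/t; lra.
  by rewrite edist_segment -/N opprD addNKr normrN gtr0_norm //; nra.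
- move=> [e e0 sub].
  have [s [/andP[s0 s1] nFs] ts] := sup_adherent (divr_gt0 e0 N1) S_sup.
  have st : s <= t by apply: sup_upper_bound => //; split; rewrite ?s0 ?s1.
  apply: nFs; apply: sub; rewrite /eball /= edist_segment -/N ler0_norm ?subr_le0 //.
  have : (t - s) * (N + 1) < e by rewrite -ltr_pdivlMr //; rewrite -/t in ts; lra.
  have := enorm_ge0 (p - c); rewrite -/N; nra.
Qed.

End Segments.

Section Thickenings.
Variables (R : realType) (d : nat).
Implicit Types (A E : set 'rV[R]_d) (r s : R).

Lemma thicken_eclosure_thicken A r s :
  thicken (eclosure (thicken A r)) s `<=` thicken A (r + s).
Proof.
move=> x [b bcl xb].
have [z [a Aa za] bz] : exists2 z, thicken A r z & edist b z < s - edist x b.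
  by apply: bcl; rewrite subr_gt0.
exists a => //; rewrite (le_lt_trans (edist_triangle _ b _)) //.
by rewrite (le_lt_trans (lerD (lexx _) (edist_triangle _ z _))) //; lra.
Qed.

Lemma thicken_eboundary_thicken A r s :
  thicken (eboundary (thicken A r)) s `<=` thicken A (r + s).
Proof. by move=> x [b [bcl _] xb]; apply: thicken_eclosure_thicken; exists b. Qed.

Lemma thicken_disjoint_eball E r c : eball c r `&` E = set0 -> ~ thicken E r c.
Proof.
move=> cE [a Ea ca].
have : (eball c r `&` E) a by split; rewrite // /eball /= edistC.
by rewrite cE.
Qed.

Lemma coR_eball_sub_thicken E r x b :
  coR r E x -> edist x b < r -> eball b (r - edist x b) `<=` thicken E r.
Proof.
move=> xco xb z; rewrite /eball /= => zb; apply: contrapT => nFz.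
apply: (xco z).
  by rewrite -subset0 => a [za Ea]; apply: nFz; exists a; rewrite // edistC.
rewrite /eball /= (le_lt_trans (edist_triangle _ b _)) // (edistC b); lra.
Qed.

Lemma coR_far_eboundary E r : coR r E `<=` far (eboundary (thicken E r)) r.
Proof.
move=> x xco [b [_ bint] xb]; apply: bint.
by exists (r - edist x b); [rewrite subr_gt0 | exact: coR_eball_sub_thicken].
Qed.

Lemma far_eboundaryD_coR E r :
  far (eboundary (thicken E r)) r `\` coR r E `<=` far E (2 * r).
Proof.
move=> x [xfar xnco] [e Ee xe].
have [c cE xc] : exists2 c, eball c r `&` E = set0 & eball c r x.
  by apply: contrapT => nex; apply: xnco => c cE xc; apply: nex; exists c.
set p := 2^-1 *: (x + e).
rewrite mulr_natl mulr2n in xe.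
have xp : edist x p < r by rewrite edist_midpoint; lra.
have Fp : thicken E r p.
  by exists e; rewrite // edistC /p addrC edist_midpoint edistC; lra.
have [t t01 yb] := segment_meets_eboundary (thicken_disjoint_eball cE) Fp.
apply: xfar; exists (c + t *: (p - c)) => //.
rewrite edistC; apply: eball_segment => //; rewrite /eball /= edistC //.
Qed.

End Thickenings.

Theorem mainTheorem1 (R : realType) (d : nat) (r : R) (E : set 'rV[R]_d) :
  0 < r -> body E ->
  far (eboundary (thicken E r)) r = coR r E `|` far E (2 * r).
Proof.
move=> _ _; apply/seteqP; split => x.
- move=> xfar; have [xco|xnco] := pselect (coR r E x); first by left.
  by right; apply: far_eboundaryD_coR.
- case=> [|xfar]; first exact: coR_far_eboundary.
  by move=> xb; apply: xfar; rewrite mulr_natl mulr2n; exact: thicken_eboundary_thicken.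
Qed.
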